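(* Let $D$ be a finite digraph and $k$ a positive integer. The cop player has a winning strategy with $k$ cops in the lift-free cops-and-robber game on $D$ if and only if $\mathrm{ddp}(D) \le k$.
   Context: A reachable fragment of a digraph $D$ is a vertex set $R\subseteq V(D)$, maximal by inclusion, that contains a vertex $s$ (a source) from which every vertex of $R$ is reachable by a directed path in $D$; it is regarded as the induced subdigraph $D[R]$. The DAG-depth $\mathrm{ddp}(D)$ is defined recursively: $\mathrm{ddp}(D)=1$ if $|V(D)|=1$; if $D$ has exactly one reachable fragment and $|V(D)|>1$, then $\mathrm{ddp}(D)=1+\min_{v\in V(D)}\mathrm{ddp}(D-v)$; otherwise, if $R_1,\dots,R_p$ ($p\ge 2$) are the reachable fragments of $D$, $\mathrm{ddp}(D)=\max_{1\le i\le p}\mathrm{ddp}(D[R_i])$. Lift-free cops-and-robber game on a digraph $D$ with $k$ cops: the robber occupies a vertex, chosen at the start, and knows the cops' positions; the cop player knows the robber's position. In each turn the cop player announces a vertex on which a new cop will be placed; before the cop lands, the robber may move arbitrarily far along directed paths of $D$ (respecting edge directions) that avoid vertices already occupied by cops. Once placed, a cop never leaves its vertex. The robber is caught when a cop is placed on the robber's current vertex (equivalently, the robber stands on a vertex $v$ such that $v$ and all vertices of $N^+_D(v)$ are occupied by cops). The cop player wins if the robber is caught before the $k$ cops are used up; otherwise the robber wins. *)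

From mathcomp Require Import all_boot.
Set Implicit Arguments. Unset Strict Implicit. Unset Printing Implicit Defensive.

Section Digraph.
Variables (T : finType) (e : rel T).

Definition reachIn (S : {set T}) (x y : T) : bool :=
  connect [rel a b | [&& a \in S, b \in S & e a b]] x y.

Definition rooted_in (S R : {set T}) : bool :=
  (R \subset S) && [exists s in R, R \subset [set y | reachIn S s y]].

Definition is_fragment (S R : {set T}) : bool :=
  rooted_in S R &&
  [forall R' : {set T}, (rooted_in S R' && (R \subset R')) ==> (R' == R)].

Definition fragments (S : {set T}) : {set {set T}} :=
  [set R | is_fragment S R].

(* DAG-depth of D[S], by recursion with fuel (fuel #|S| suffices: deleted
   vertices and, when there are >= 2 fragments, fragments are proper subsets).
   The minimum in the one-fragment case ranges over the nonempty set S
   (since #|S| > 1), so the neutral element of minn is irrelevant. *)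
Fixpoint ddp_aux (n : nat) (S : {set T}) : nat :=
  match n with
  | 0 => 0
  | n'.+1 =>
      if #|S| <= 1 then #|S|
      else if #|fragments S| == 1 then
        (\big[minn/#|S|]_(v in S) ddp_aux n' (S :\ v)).+1
      else \max_(R in fragments S) ddp_aux n' R
  end.

Definition ddp_set (S : {set T}) : nat := ddp_aux #|S| S.

Definition ddp : nat := ddp_set [set: T].

Definition robber_reach (C : {set T}) (x y : T) : bool :=
  connect [rel a b | [&& a \notin C, b \notin C & e a b]] x y.

(* In each turn the
   cop player announces c (knowing C and r); the robber then moves to any r'
   reachable from r avoiding C; the cop lands on c, catching the robber iff
   c = r'.  Existential choices are made independently at each node of the
   game tree, so this is exactly existence of a (history-dependent) winning
   strategy. *)
Fixpoint cops_win (k : nat) (C : {set T}) (r : T) : Prop :=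
  match k with
  | 0 => False
  | k'.+1 => exists c : T, forall r' : T, robber_reach C r r' ->
               r' = c \/ cops_win k' (c |: C) r'
  end.

Definition cops_have_winning_strategy (k : nat) : Prop :=
  forall r0 : T, cops_win k set0 r0.

End Digraph.

From mathcomp Require Import all_boot.
Set Implicit Arguments. Unset Strict Implicit. Unset Printing Implicit Defensive.

(* The game is memoryless: all that matters is the robber's territory, the set
   of vertices he can reach from his position while avoiding the cops.  Hence
   whether k cops catch a robber starting anywhere in D[S] obeys the recursion
   defining ddp(D[S]).  If some vertex of D[S] reaches all of it, the robber
   may as well stand there, a first cop outside S is wasted, and a first cop
   on v leaves a robber free to roam all of D[S - v].  Otherwise the set the
   robber can reach is rooted, so it lies inside a reachable fragment, and
   that fragment can be played in isolation. *)

Lemma geq_big_minn (I : finType) (A : {pred I}) (F : I -> nat) m k :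
  (\big[minn/m]_(i in A) F i <= k) = (m <= k) || [exists i in A, F i <= k].
Proof.
have -> : (\big[minn/m]_(i in A) F i <= k) =
          (m <= k) || has (fun i => (i \in A) && (F i <= k)) (index_enum I).
  elim: (index_enum I) => [|i r IHr]; rewrite ?big_nil ?big_cons /= ?orbF //.
  by case: (i \in A); rewrite /= ?geq_min IHr // orbCA.
congr orb; apply/hasP/exists_inP => [[i _ /andP [Ai Fik]] | [i Ai Fik]].
  by exists i.
by exists i; rewrite ?mem_index_enum ?Ai.
Qed.

Lemma connect_preserved (T : finType) (f : rel T) (P : pred T) x y :
  (forall a b, P a -> f a b -> P b) -> P x -> connect f x y -> P y.
Proof.
move=> P_f Px /connectP [p p_path ->] {y}.
by elim: p x Px p_path => //= z p IHp x Px /andP [fxz]; apply: IHp (P_f _ _ Px fxz).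
Qed.

Lemma card_setD1_lt (T : finType) (S : {set T}) (v : T) : v \in S -> #|S :\ v| < #|S|.
Proof. by move=> vS; rewrite (cardsD1 v S) vS. Qed.

Section CopsAndRobber.
Variables (T : finType) (e : rel T).

Definition reach (S : {set T}) (r : T) : {set T} := [set y | reachIn e S r y].

Lemma reach_refl (S : {set T}) (r : T) : r \in reach S r.
Proof. by rewrite inE /reachIn connect0. Qed.

Lemma reach_sub (S : {set T}) (r : T) : r \in S -> reach S r \subset S.
Proof.
move=> rS; apply/subsetP => y; rewrite inE.
by apply: connect_preserved rS => a b _ /and3P [].
Qed.

Lemma reach_mono (X Y : {set T}) (r : T) : X \subset Y -> reach X r \subset reach Y r.
Proof.
move=> sXY; apply/subsetP => y; rewrite !inE; apply: connect_sub => a b /and3P [aX bX ab].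
by apply: connect1; rewrite /= (subsetP sXY _ aX) (subsetP sXY _ bX).
Qed.

Lemma reach_trans (S : {set T}) (x y : T) : y \in reach S x -> reach S y \subset reach S x.
Proof. by rewrite inE => xy; apply/subsetP => z; rewrite !inE; apply: connect_trans. Qed.

Lemma reach_restrict (S F : {set T}) (r : T) :
  reach S r \subset F -> reach S r \subset reach F r.
Proof.
move=> sRF; apply/subsetP => y; rewrite !inE => /connectP [p p_path ->] {y}.
have p_in_F : all [in F] (r :: p).
  by apply/allP => z /(path_connect p_path) rz; rewrite (subsetP sRF) ?inE.
apply/connectP; exists p => //; apply: sub_in_path p_in_F p_path.
by move=> a b aF bF /and3P [_ _ ab]; rewrite /= aF bF.
Qed.

Lemma reach_rooted (S : {set T}) (r : T) : r \in S -> rooted_in e S (reach S r).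
Proof.
move=> rS; rewrite /rooted_in reach_sub //=.
by apply/exists_inP; exists r; rewrite ?reach_refl.
Qed.

Lemma reach_setD1 (A : {set T}) (r r' c : T) :
  r \in A -> r' \in reach A r -> r' != c ->
  reach (reach A r :\ c) r' = reach (A :\ c) r'.
Proof.
move=> rA r'_r r'c; have sRA := reach_sub rA.
have r'Ac : r' \in A :\ c by rewrite !inE r'c (subsetP sRA).
apply/eqP; rewrite eqEsubset reach_mono ?setSD //=.
apply: reach_restrict; have /subsetD1P [_ cNr'] := reach_sub r'Ac.
rewrite subsetD1 cNr' andbT; apply: subset_trans (reach_trans r'_r).
exact/reach_mono/subD1set.
Qed.

Lemma robber_reachE (C : {set T}) (x y : T) :
  robber_reach e C x y = (y \in reach (~: C) x).
Proof. by rewrite inE; apply: eq_connect => a b; rewrite /= !inE. Qed.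

Lemma fragment_sub (S R : {set T}) : R \in fragments e S -> R \subset S.
Proof. by rewrite inE => /andP [/andP []]. Qed.

Lemma fragment_rooted (S R : {set T}) : R \in fragments e S -> rooted_in e S R.
Proof. by rewrite inE => /andP []. Qed.

Lemma fragment_max (S R R' : {set T}) :
  R \in fragments e S -> rooted_in e S R' -> R \subset R' -> R' = R.
Proof.
rewrite inE => /andP [_ /forallP R_max] rootR' sRR'.
by apply/eqP; move/implyP: (R_max R'); apply; rewrite rootR'.
Qed.

Lemma rooted_sub_fragment (S R : {set T}) :
  rooted_in e S R -> exists2 F, F \in fragments e S & R \subset F.
Proof.
pose P F := rooted_in e S F && (R \subset F).
move=> rootR; have PR : P R by rewrite /P rootR subxx.
case: (arg_maxnP (fun F : {set T} => #|F|) PR) => F /andP [rootF sRF] F_max.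
exists F => //; rewrite inE /is_fragment rootF; apply/forallP => R'.
apply/implyP => /andP [rootR' sFR']; rewrite eq_sym eqEcard sFR'; apply: F_max.
by rewrite /P rootR' (subset_trans sRF sFR').
Qed.

Lemma one_fragmentE (S : {set T}) : (#|fragments e S| == 1) = rooted_in e S S.
Proof.
apply/cards1P/idP => [[F fragsE] | rootS].
  have FF : F \in fragments e S by rewrite fragsE set11.
  suff SF : S = F by rewrite {2}SF; apply: fragment_rooted FF.
  apply/eqP; rewrite eqEsubset (fragment_sub FF) andbT; apply/subsetP => v vS.
  have [G] := rooted_sub_fragment (reach_rooted vS).
  by rewrite fragsE inE => /eqP -> /subsetP; apply; apply: reach_refl.
exists S; apply/setP => R; rewrite inE; apply/idP/eqP => [RF | ->].
  by rewrite (fragment_max RF rootS (fragment_sub RF)).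
rewrite inE /is_fragment rootS; apply/forall_inP => R' /andP [rootR' sSR'].
by rewrite eqEsubset sSR' andbT; case/andP: rootR'.
Qed.

Lemma card_fragment_lt (S R : {set T}) :
  ~~ rooted_in e S S -> R \in fragments e S -> #|R| < #|S|.
Proof.
move=> NrootS RF; rewrite ltnNge; apply: contra NrootS => leSR.
suff RS : R = S by rewrite -{2}RS; apply: fragment_rooted RF.
by apply/eqP; rewrite eqEcard (fragment_sub RF).
Qed.

Lemma rooted_in_neq0 (S R : {set T}) : rooted_in e S R -> R != set0.
Proof. by case/andP => _ /exists_inP [s sR _]; apply/set0Pn; exists s. Qed.

Lemma rooted_in_set1 (v : T) : rooted_in e [set v] [set v].
Proof.
rewrite /rooted_in subxx; apply/exists_inP; exists v; rewrite ?set11 //.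
by rewrite sub1set reach_refl.
Qed.

Lemma ddp_aux_fuel (n m : nat) (S : {set T}) :
  #|S| <= n -> #|S| <= m -> ddp_aux e n S = ddp_aux e m S.
Proof.
elim: n m S => [|n IHn] [|m] S //=; rewrite ?leqn0 ?cards_eq0.
- by move=> /eqP ->; rewrite cards0.
- by move=> _ /eqP ->; rewrite cards0.
move=> le_Sn le_Sm; case: ifP => // _; rewrite one_fragmentE; case: ifP => rootS.
  congr _.+1; apply: eq_bigr => v /card_setD1_lt lt_S'S.
  by apply: IHn; rewrite -ltnS (leq_trans lt_S'S).
apply: eq_bigr => R /(card_fragment_lt (negbT rootS)) lt_RS.
by apply: IHn; rewrite -ltnS (leq_trans lt_RS).
Qed.

Lemma ddp_setE (S : {set T}) :
  ddp_set e S = if rooted_in e S S then (\big[minn/#|S|]_(v in S) ddp_set e (S :\ v)).+1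
                else \max_(R in fragments e S) ddp_set e R.
Proof.
rewrite /ddp_set; case: (ltngtP #|S| 1) => [|S_gt1 | /eqP/cards1P [v ->]].
- rewrite ltnS leqn0 cards_eq0 => /eqP ->.
  have /negPf-> : ~~ rooted_in e set0 set0 by apply: contraL (@rooted_in_neq0 _ _) _.
  by rewrite cards0 big1 // => R /fragment_sub; rewrite subset0 => /eqP ->; rewrite cards0.
- have [n Sn] : exists n, #|S| = n.+1 by exists #|S|.-1; rewrite prednK // ltnW.
  rewrite {1}Sn /= leqNgt S_gt1 one_fragmentE; case: ifP => rootS.
    congr _.+1; apply: eq_bigr => v vS; apply: ddp_aux_fuel => //.
    by rewrite -ltnS -Sn card_setD1_lt.
  apply: eq_bigr => R RF; apply: ddp_aux_fuel => //.
  by rewrite -ltnS -Sn card_fragment_lt ?rootS.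
- rewrite rooted_in_set1 cards1 /= cards1; congr _.+1.
  apply/esym/eqP; rewrite -leqn0 geq_big_minn; apply/orP; right.
  by apply/exists_inP; exists v; rewrite ?set11 // setDv cards0.
Qed.

(* [capture k X]: k cops catch a robber who may run to any vertex of X before
   the next cop lands. *)
Fixpoint capture (k : nat) (X : {set T}) : Prop :=
  if k is k'.+1 then
    exists c, forall r, r \in X :\ c -> capture k' (reach (X :\ c) r)
  else False.

Definition cops_win_on (k : nat) (S : {set T}) : Prop :=
  forall r, r \in S -> capture k (reach S r).

Lemma capture_mono (k : nat) (X Y : {set T}) :
  X \subset Y -> capture k Y -> capture k X.
Proof.
elim: k X Y => [//|k IHk] X Y sXY [c Yc]; exists c => r rXc.
by apply: IHk (Yc r (subsetP (setSD _ sXY) _ rXc)); apply/reach_mono/setSD.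
Qed.

Lemma capture_card (k : nat) (X : {set T}) : X != set0 -> #|X| < k -> capture k X.
Proof.
elim: k X => [//|k IHk] X /set0Pn [c cX] lt_Xk; exists c => r rXc.
apply: IHk; first by apply/set0Pn; exists r; apply: reach_refl.
rewrite -ltnS (leq_ltn_trans _ lt_Xk) // (leq_ltn_trans _ (card_setD1_lt cX)) //.
exact/subset_leq_card/reach_sub.
Qed.

Lemma capture_succ (k : nat) (S : {set T}) : S != set0 ->
  capture k.+1 S <-> exists2 v, v \in S & cops_win_on k (S :\ v).
Proof.
move=> /set0Pn [s sS]; split => [[c Sc] | [v _ Sv]]; last by exists v.
have [cS | cNS] := boolP (c \in S); first by exists c.
have sSsSc : S :\ s \subset S :\ c by rewrite subsetD1 subD1set !inE (negPf cNS) andbF.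
exists s => // r rSs; apply: capture_mono (Sc r (subsetP sSsSc _ rSs)).
exact: reach_mono.
Qed.

Lemma cops_win_on_rooted (k : nat) (S : {set T}) :
  rooted_in e S S -> cops_win_on k S <-> capture k S.
Proof.
case/andP => _ /exists_inP [s sS S_s]; split => [Sk | Sk r rS].
  exact: capture_mono S_s (Sk s sS).
exact: capture_mono (reach_sub rS) Sk.
Qed.

Lemma cops_win_on_fragments (k : nat) (S : {set T}) :
  cops_win_on k S <-> forall R, R \in fragments e S -> cops_win_on k R.
Proof.
split => [Sk R RF r rR | Fk r rS].
  have sRS := fragment_sub RF.
  exact: capture_mono (reach_mono r sRS) (Sk r (subsetP sRS r rR)).
have [F FF sRF] := rooted_sub_fragment (reach_rooted rS).
exact: capture_mono (reach_restrict sRF) (Fk F FF r (subsetP sRF r (reach_refl S r))).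
Qed.

Lemma cops_winE (k : nat) (C : {set T}) (r : T) :
  r \notin C -> cops_win e k C r <-> capture k (reach (~: C) r).
Proof.
elim: k C r => [//|k IHk] C r rNC /=.
have rC' : r \in ~: C by rewrite inE.
have reach_next c r' : r' \in reach (~: C) r :\ c ->
    r' \notin c |: C /\ reach (reach (~: C) r :\ c) r' = reach (~: (c |: C)) r'.
  case/setD1P => r'c r'_r; rewrite setCU setIC -setDE reach_setD1 //.
  by split; rewrite // !inE negb_or r'c -in_setC (subsetP (reach_sub rC')).
split=> [[c Cc] | [c Rc]]; exists c => r'.
  move=> /[dup] /reach_next [r'NcC ->] /setD1P [r'c r'_r].
  case: (Cc r'); first by rewrite robber_reachE.
    by move/eqP; rewrite (negPf r'c).
  by move/(IHk _ _ r'NcC).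
rewrite robber_reachE => r'_r; have [-> | r'c] := eqVneq r' c; [by left | right].
have r'Rc : r' \in reach (~: C) r :\ c by apply/setD1P.
have [r'NcC eq_reach] := reach_next c r' r'Rc; apply/(IHk _ _ r'NcC).
by rewrite -eq_reach; apply: Rc.
Qed.

Lemma cops_have_winning_strategyE (k : nat) :
  cops_have_winning_strategy e k <-> cops_win_on k [set: T].
Proof.
have cops_win0 r : cops_win e k set0 r <-> capture k (reach [set: T] r).
  by rewrite -setC0; apply: cops_winE; rewrite inE.
by split=> [W r _ | W r]; apply/cops_win0; [apply: W | apply: W].
Qed.

Theorem cops_win_onP (k : nat) (S : {set T}) : cops_win_on k S <-> ddp_set e S <= k.
Proof.
have [n] := ubnP #|S|; elim: n => // n IHn in k S *; rewrite ltnS => le_Sn.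
rewrite ddp_setE; case: ifPn => [rootS | NrootS].
  have IHv k' v : v \in S -> cops_win_on k' (S :\ v) <-> ddp_set e (S :\ v) <= k'.
    by move=> vS; apply: IHn; apply: leq_trans (card_setD1_lt vS) le_Sn.
  apply: iff_trans (cops_win_on_rooted k rootS) _; case: k => [|k]; first by split.
  have S_neq0 := rooted_in_neq0 rootS.
  apply: iff_trans (capture_succ k S_neq0) _; rewrite ltnS geq_big_minn; split.
    by case=> v vS /(IHv k v vS) Sv; apply/orP; right; apply/exists_inP; exists v.
  case/orP => [le_Sk | /exists_inP [v vS /(IHv k v vS) Sv]]; last by exists v.
  by apply/(capture_succ k S_neq0); apply: capture_card.
have IHR R : R \in fragments e S -> cops_win_on k R <-> ddp_set e R <= k.
  by move=> RF; apply: IHn; apply: leq_trans (card_fragment_lt NrootS RF) le_Sn.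
apply: iff_trans (cops_win_on_fragments k S) _; split => [Fk | /bigmax_leqP Fk R RF].
  by apply/bigmax_leqP => R RF; apply/(IHR R RF)/Fk.
by apply/(IHR R RF)/Fk.
Qed.

End CopsAndRobber.

Theorem theorem2p1 (T : finType) (e : rel T) (k : nat) :
  0 < #|T| -> 0 < k ->
  (cops_have_winning_strategy e k <-> ddp e <= k).
Proof.
move=> _ _.
exact: iff_trans (cops_have_winning_strategyE e k) (cops_win_onP e k [set: T]).
Qed.
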